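(* The inhomogeneous domain wall boundary partition function $Z_N(\{u\}_N|\{w\}_N)$ satisfies: (1) it is a polynomial in $w_N$ of degree at most $N-1$; (2) it is symmetric in $u_1,\dots,u_N$; (3) $Z_1(u_1|w_1)=(1-t)cu_1$; (4) for $N\ge2$ and each $k\in\{1,\dots,N\}$, \[Z_N(\{u\}_N|\{w\}_N)\big|_{w_N=-au_k/b}=(1-t)ca^{N-1}u_k\prod_{j\neq k}(tu_j-u_k)\prod_{j=1}^{N-1}(eu_k+fw_j)\,Z_{N-1}(u_1,\dots,\widehat{u_k},\dots,u_N|w_1,\dots,w_{N-1}),\] where $\widehat{u_k}$ means $u_k$ is omitted.
   Context: Fix complex parameters $t,a,b,c,d,e,f$, all nonzero, with $t\neq1$, satisfying $cd+af=0$ and $tcd+be=0$. The inhomogeneous $L$-operator $L_{aj}(u,w)$ on $W_a\otimes V_j$ ($\cong\mathbb{C}^2\otimes\mathbb{C}^2$, basis $|0\rangle,|1\rangle$) has matrix elements ${}_a\langle\gamma|{}_j\langle\delta|L_{aj}(u,w)|\alpha\rangle_a|\beta\rangle_j=[L(u,w)]^{\gamma\delta}_{\alpha\beta}$: $[L]^{00}_{00}=au+bw$, $[L]^{01}_{01}=atu+bw$, $[L]^{01}_{10}=(1-t)cu$, $[L]^{10}_{01}=(1-t)dw$, $[L]^{10}_{10}=eu+fw$, $[L]^{11}_{11}=eu+tfw$, all others $0$. Define $B_N(u|\{w\}_N)={}_a\langle0|L_{aN}(u,w_N)\cdots L_{a1}(u,w_1)|1\rangle_a$ on $V_1\otimes\cdots\otimes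 V_N$ and $Z_N(\{u\}_N|\{w\}_N)=\langle1\cdots N|B_N(u_1|\{w\}_N)\cdots B_N(u_N|\{w\}_N)|\Omega\rangle$ with $|\Omega\rangle=|0\rangle^{\otimes N}$, $\langle1\cdots N|=\langle1|^{\otimes N}$. *)

From HB Require Import structures.
From mathcomp Require Import all_boot all_order all_algebra.
Set Implicit Arguments. Unset Strict Implicit. Unset Printing Implicit Defensive.
Import Order.TTheory GRing.Theory Num.Theory.
Local Open Scope ring_scope.

Section Six.
Variable R : numClosedFieldType.
Variables t a b c d e f : R.

(* [L(u,w)]^{g dl}_{al be}, basis |0> = false, |1> = true:
   g = outgoing auxiliary, dl = outgoing quantum, al = incoming auxiliary,
   be = incoming quantum. *)
Definition Lent (u w : R) (g dl al be : bool) : R :=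
  match g, dl, al, be with
  | false, false, false, false => a * u + b * w
  | false, true,  false, true  => a * t * u + b * w
  | false, true,  true,  false => (1 - t) * c * u
  | true,  false, false, true  => (1 - t) * d * w
  | true,  false, true,  false => e * u + f * w
  | true,  true,  true,  true  => e * u + t * f * w
  | _, _, _, _ => 0
  end.

(* Matrix element of L_{a n}(u,w_n) ... L_{a 1}(u,w_1) between quantum
   basis states outs / ins on sites 1..n (listed in order w_1..w_n),
   with incoming auxiliary state al and outgoing auxiliary state fin. *)
Fixpoint chain (u : R) (ws : seq R) (outs ins : seq bool) (al fin : bool) : R :=
  match ws, outs, ins with
  | w :: ws', o :: os, i :: is_ =>
      \sum_(g : bool) Lent u w g o al i * chain u ws' os is_ g fin
  | [::], [::], [::] => (al == fin)%:R
  | _, _, _ => 0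
  end.

(* <outs| B_N(u|{w}_N) |ins> = <outs| _a<0| L_{aN}...L_{a1} |1>_a |ins> *)
Definition Bel (u : R) (ws : seq R) (outs ins : seq bool) : R :=
  chain u ws outs ins true false.

(* Z_N({u}_N|{w}_N) = <1...1| B(u_1) ... B(u_N) |0...0>;
   vectors are represented by their coordinate functions. *)
Definition Zpf (N : nat) (us ws : seq R) : R :=
  foldr (fun (u : R) (v : N.-tuple bool -> R) =>
           fun out : N.-tuple bool =>
             \sum_(s : N.-tuple bool) Bel u ws out s * v s)
        (fun s : N.-tuple bool => (s == nseq_tuple N false)%:R)
        us (nseq_tuple N true).

End Six.

From HB Require Import structures.
From mathcomp Require Import all_boot all_order all_algebra.
From mathcomp Require Import ring.
From Stdlib Require Import FunctionalExtensionality.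
Import Order.TTheory GRing.Theory Num.Theory.
Set Implicit Arguments. Unset Strict Implicit. Unset Printing Implicit Defensive.
Local Open Scope ring_scope.

(** The Yang-Baxter relation [RLL = LLR] of the six-vertex weights holds exactly
    modulo [c d + a f] and [t c d + b e]; propagated along the row it becomes
    [RTT = TTR], whose [(00, 11)] entry reads [(t u - v) B(u) B(v) = (t u - v) B(v) B(u)].
    Taking [u] to be an indeterminate cancels [t u - v], so the [B] operators commute
    and [Z_N] is symmetric.  Splitting off the last site, [B(u)] acts on the last spin
    through weights linear in [w_N], which bounds the degree in [w_N].  Finally let
    [B(u_k)] act first on the vacuum: at [w_N = - a u_k / b] its weight [a u_k + b w_N]
    at the last site vanishes, so the last column freezes; [B(u_k)] contributes
    [(1 - t) c u_k] there and [D(u_k)] on the vacuum of the first [N - 1] sites, i.e.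
    [prod_j (e u_k + f w_j)], while every other [B(u_j)] contributes
    [a t u_j + b w_N = a (t u_j - u_k)] and acts as a [B] of size [N - 1]. *)

Lemma nseqS_rcons (T : Type) n (x : T) : nseq n.+1 x = rcons (nseq n x) x.
Proof. by rewrite -addn1 nseqD cats1. Qed.

Lemma big_bool_pair (V : nmodType) (F : bool * bool -> V) :
  \sum_(p : bool * bool) F p =
  F (true, true) + F (true, false) + F (false, true) + F (false, false).
Proof.
rewrite (eq_bigr (fun p => F (p.1, p.2))); last by case.
by rewrite -(pair_bigA _ (fun x y => F (x, y))) !big_bool /= !addrA.
Qed.

Lemma foldr_perm (T : eqType) (V : Type) (F : T -> V -> V) v (s1 s2 : seq T) :
  (forall x y w, F x (F y w) = F y (F x w)) -> perm_eq s1 s2 ->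
  foldr F v s1 = foldr F v s2.
Proof.
move=> FC; have F_foldr x w s : foldr F (F x w) s = F x (foldr F w s).
  by elim: s => //= y s ->; rewrite FC.
have foldrC s s' w : foldr F (foldr F w s) s' = foldr F (foldr F w s') s.
  by elim: s' => //= x s' ->; rewrite F_foldr.
by apply: catCA_perm_subst => s s' s''; rewrite !foldr_cat foldrC.
Qed.

Lemma big_ord_skip (R : comPzSemiRingType) (G : R -> R) (us : seq R) n k :
  size us = n.+1 -> (k < n.+1)%N ->
  \prod_(j < n.+1 | j != k :> nat) G us`_j = \prod_(x <- take k us ++ drop k.+1 us) G x.
Proof.
move=> su kn; rewrite big_mkcond (bigD1_ord (Ordinal kn)) //= eqxx mul1r.
rewrite (big_nth 0) size_cat size_take size_drop su kn subSS subnKC ?big_mkord //.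
apply: eq_bigr => i _; rewrite /= /bump nth_cat size_take su kn.
case: ltnP => [ik|ki]; first by rewrite add0n ltn_eqF ?nth_take.
by rewrite add1n gtn_eqF ?ltnS // nth_drop addSn subnKC.
Qed.

Lemma map_horner_polyC (R : comNzRingType) (x : R) ws :
  map (horner_eval x) (map polyC ws) = ws.
Proof. by rewrite -map_comp map_id_in // => w _; rewrite /= /horner_eval hornerC. Qed.

Fixpoint bitseqs (n : nat) : seq (seq bool) :=
  if n is n'.+1 then [seq x :: s | x <- [:: true; false], s <- bitseqs n']
  else [:: [::]].

Lemma mem_bitseqs n s : (s \in bitseqs n) = (size s == n).
Proof.
elim: n s => [|n IH] s; first by rewrite inE -size_eq0.
apply/allpairsP/idP => [[[x s'] /= [_ + ->]]|]; first by rewrite IH.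
by case: s => // x s; rewrite eqSS -IH => sn; exists (x, s); case: x.
Qed.

Lemma uniq_bitseqs n : uniq (bitseqs n).
Proof.
elim: n => // n IH; rewrite /bitseqs -/bitseqs.
by apply: allpairs_uniq => // -[? ?] [? ?] _ _ [-> ->].
Qed.

Section BitseqSums.
Variable V : nmodType.
Implicit Type F : seq bool -> V.

Lemma big_bitseqs0 F : \sum_(s <- bitseqs 0) F s = F [::].
Proof. exact: big_seq1. Qed.

Lemma big_bitseqsS n F :
  \sum_(s <- bitseqs n.+1) F s = \sum_(x : bool) \sum_(s <- bitseqs n) F (x :: s).
Proof. by rewrite /= cats0 big_cat !big_map big_bool. Qed.

Lemma big_bitseqs_rcons n F :
  \sum_(s <- bitseqs n.+1) F s = \sum_(s <- bitseqs n) \sum_(x : bool) F (rcons s x).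
Proof.
elim: n F => [|n IH] F.
  by rewrite big_bitseqsS big_bitseqs0; under eq_bigr do rewrite big_bitseqs0.
rewrite big_bitseqsS (eq_bigr _ (fun x _ => IH (fun s => F (x :: s)))).
by rewrite [RHS]big_bitseqsS.
Qed.

Lemma big_tuple_bitseqs n F :
  \sum_(s : n.-tuple bool) F s = \sum_(s <- bitseqs n) F s.
Proof.
elim: n F => [|n IH] F.
  rewrite big_bitseqs0 (big_pred1 ([tuple] : 0.-tuple bool)) // => s.
  by rewrite [s]tuple0 /= eqxx.
have cons_bij : bijective (fun p : bool * n.-tuple bool => [tuple of p.1 :: p.2]).
  exists (fun s : n.+1.-tuple bool => (thead s, [tuple of behead s])).
    by case=> x s; congr pair; apply: val_inj.
  by move=> s; apply: val_inj; rewrite /= [in RHS](tuple_eta s).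
rewrite (reindex _ (onW_bij _ cons_bij)) /=.
rewrite -(pair_big xpredT xpredT (fun x (s : n.-tuple bool) => F (x :: s))) big_bitseqsS.
by apply: eq_bigr => x _; apply: IH.
Qed.

End BitseqSums.

Lemma big_bitseqs_delta (R : pzSemiRingType) n (F : seq bool -> R) z :
  size z = n -> \sum_(s <- bitseqs n) F s * (s == z)%:R = F z.
Proof.
move=> /eqP; rewrite -mem_bitseqs => zn.
rewrite (bigD1_seq z) ?uniq_bitseqs //= eqxx mulr1 big1 ?addr0 // => s /negbTE->.
exact: mulr0.
Qed.

(** [Lweight] and [monodromy] restate [Lent] and [chain] over an arbitrary commutative
    ring, so that the spectral parameters can be taken polynomial; vectors of
    [V_1 (x) ... (x) V_n] are coordinate functions on [bitseqs n] (see [Zpf_pfZ]). *)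
Section SixVertexModel.
Variable R : comPzRingType.
Variables t a b c d e f : R.

Definition Lweight (u w : R) (g dl al be : bool) : R :=
  match g, dl, al, be with
  | false, false, false, false => a * u + b * w
  | false, true,  false, true  => a * t * u + b * w
  | false, true,  true,  false => (1 - t) * c * u
  | true,  false, false, true  => (1 - t) * d * w
  | true,  false, true,  false => e * u + f * w
  | true,  true,  true,  true  => e * u + t * f * w
  | _, _, _, _ => 0
  end.

Fixpoint monodromy (u : R) (ws : seq R) (outs ins : seq bool) (al fin : bool) : R :=
  match ws, outs, ins with
  | w :: ws', o :: os, i :: is_ =>
      \sum_(g : bool) Lweight u w g o al i * monodromy u ws' os is_ g fin
  | [::], [::], [::] => (al == fin)%:R
  | _, _, _ => 0
  end.

(** The entry [_a<fin| T(u) |al>_a] of the monodromy matrix, acting on vectors. *)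
Definition Top u ws al fin (v : seq bool -> R) (out : seq bool) : R :=
  \sum_(s <- bitseqs (size ws)) monodromy u ws out s al fin * v s.

Definition Bop u ws := Top u ws true false.
Definition Dop u ws := Top u ws true true.

Definition vacuum n (s : seq bool) : R := (s == nseq n false)%:R.

Definition pfZ us ws :=
  foldr (fun u => Bop u ws) (vacuum (size ws)) us (nseq (size ws) true).

Lemma eq_Top u ws al fin v1 v2 :
  (forall s, size s = size ws -> v1 s = v2 s) ->
  Top u ws al fin v1 =1 Top u ws al fin v2.
Proof. by move=> eq_v out; apply: eq_big_seq => s; rewrite mem_bitseqs => /eqP/eq_v->. Qed.

Lemma Top0 u ws al fin v out :
  (forall s, size s = size ws -> v s = 0) -> Top u ws al fin v out = 0.
Proof. by move=> v0; rewrite (eq_Top _ _ _ v0) /Top big1 // => s _; rewrite mulr0. Qed.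

Lemma TopZ u ws al fin k v out :
  Top u ws al fin (fun s => k * v s) out = k * Top u ws al fin v out.
Proof. by rewrite /Top mulr_sumr; apply: eq_bigr => s _; rewrite mulrCA. Qed.

Lemma monodromy_rcons u ws w o ob i ib al fin :
  size o = size ws -> size i = size ws ->
  monodromy u (rcons ws w) (rcons o ob) (rcons i ib) al fin =
  \sum_(g : bool) monodromy u ws o i al g * Lweight u w fin ob g ib.
Proof.
elim: ws o i al => [|w' ws IH] [|o1 o] [|i1 i] al //=.
  by move=> _ _; rewrite !big_bool; case: al; case: fin => /=; ring.
case=> so [si]; under eq_bigr do rewrite IH // mulr_sumr.
rewrite exchange_big; apply: eq_bigr => h _.
by rewrite mulr_suml; apply: eq_bigr => g _; rewrite mulrA.
Qed.

Lemma Bop_rcons_false u ws x v o : size o = size ws ->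
  Bop u (rcons ws x) v (rcons o false) =
  (a * u + b * x) * Bop u ws (fun s => v (rcons s false)) o.
Proof.
move=> so; rewrite /Bop /Top size_rcons big_bitseqs_rcons mulr_sumr.
apply: eq_big_seq => s; rewrite mem_bitseqs => /eqP ss.
by rewrite !big_bool !monodromy_rcons // !big_bool /=; ring.
Qed.

Lemma Bop_rcons_true u ws x v o : size o = size ws ->
  Bop u (rcons ws x) v (rcons o true) =
  (a * t * u + b * x) * Bop u ws (fun s => v (rcons s true)) o +
  (1 - t) * c * u * Dop u ws (fun s => v (rcons s false)) o.
Proof.
move=> so; rewrite /Bop /Dop /Top size_rcons big_bitseqs_rcons !mulr_sumr -big_split.
apply: eq_big_seq => s; rewrite mem_bitseqs => /eqP ss.
by rewrite !big_bool !monodromy_rcons // !big_bool /=; ring.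
Qed.

Lemma monodromy_vacuum_up u ws o :
  monodromy u ws o (nseq (size ws) false) false true = 0.
Proof.
elim: ws o => [|w ws IH] [|o1 o] //=.
by rewrite big_bool /= IH mulr0 addr0; case: o1; rewrite /= mul0r.
Qed.

Lemma monodromy_vacuum_diag u ws o :
  monodromy u ws o (nseq (size ws) false) true true =
  (o == nseq (size ws) false)%:R * \prod_(w <- ws) (e * u + f * w).
Proof.
elim: ws o => [|w ws IH] [|o1 o] /=; rewrite ?big_nil ?mulr1 ?mul0r //.
rewrite big_bool big_cons /= monodromy_vacuum_up mulr0 addr0 IH eqseq_cons.
by case: o1 => /=; rewrite ?mul0r ?mulr0n ?mul0r //; ring.
Qed.

Lemma Dop_vacuum u ws o :
  Dop u ws (vacuum (size ws)) o =
  (o == nseq (size ws) false)%:R * \prod_(w <- ws) (e * u + f * w).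
Proof. by rewrite /Dop /Top big_bitseqs_delta ?size_nseq ?monodromy_vacuum_diag. Qed.

Lemma vacuum_rcons n s : size s = n ->
  vacuum n.+1 (rcons s false) = vacuum n s /\ vacuum n.+1 (rcons s true) = 0.
Proof.
by move=> _; rewrite /vacuum nseqS_rcons !eqseq_rcons andbT andbF.
Qed.

Lemma foldr_Bop_root uk us ws x : a * uk + b * x = 0 ->
  let Z := foldr (fun u => Bop u (rcons ws x)) (vacuum (size ws).+1) (rcons us uk) in
  forall o, size o = size ws ->
  Z (rcons o false) = 0 /\
  Z (rcons o true) = \prod_(u <- us) (a * t * u + b * x)
    * ((1 - t) * c * uk * \prod_(w <- ws) (e * uk + f * w))
    * foldr (fun u => Bop u ws) (vacuum (size ws)) us o.
Proof.
move=> root_x Z; rewrite {}/Z foldr_rcons; elim: us => [|u us IH] o so /=.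
  rewrite Bop_rcons_false // Bop_rcons_true // root_x mul0r /Bop /Dop.
  rewrite (Top0 _ _ _ _ (fun s ss => (vacuum_rcons ss).2)) mulr0 add0r.
  rewrite (eq_Top _ _ _ (fun s ss => (vacuum_rcons ss).1)) -/(Dop _ _) Dop_vacuum big_nil.
  by split=> //; rewrite /vacuum; ring.
rewrite Bop_rcons_false // Bop_rcons_true // /Bop /Dop.
rewrite !(Top0 _ _ _ _ (fun s ss => (IH s ss).1)) !mulr0 addr0; split=> //.
by rewrite (eq_Top _ _ _ (fun s ss => (IH s ss).2)) TopZ big_cons; ring.
Qed.

(** Pairs [(x, y) : bool * bool] index [W_a (x) W_b]; in [LL] and [TT] the first
    index pair is outgoing and the second incoming. *)
Definition Rmat (u v : R) (g al : bool * bool) : R :=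
  match g, al with
  | (false, false), (false, false) => t * u - v
  | (true, true), (true, true) => t * u - v
  | (false, true), (false, true) => (t - 1) * u
  | (false, true), (true, false) => u - v
  | (true, false), (false, true) => t * (u - v)
  | (true, false), (true, false) => (t - 1) * v
  | _, _ => 0
  end.

Definition LL u v w o i (g ga : bool * bool) : R :=
  \sum_(m : bool) Lweight u w g.1 o ga.1 m * Lweight v w g.2 m ga.2 i.

Definition TT u v ws o i (g ga : bool * bool) : R :=
  \sum_(s <- bitseqs (size ws)) monodromy u ws o s ga.1 g.1 * monodromy v ws s i ga.2 g.2.

Lemma TT_cons u v w ws o1 o i1 i g ga :
  TT u v (w :: ws) (o1 :: o) (i1 :: i) g ga =
  \sum_(h : bool * bool) LL u v w o1 i1 h ga * TT u v ws o i g h.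
Proof.
rewrite /TT big_bitseqsS /=.
transitivity (\sum_(m : bool) \sum_(h : bool * bool) \sum_(s <- bitseqs (size ws))
   (Lweight u w h.1 o1 ga.1 m * monodromy u ws o s h.1 g.1) *
   (Lweight v w h.2 m ga.2 i1 * monodromy v ws s i h.2 g.2)).
  apply: eq_bigr => m _.
  under eq_bigr do rewrite big_distrlr /= pair_bigA.
  exact: exchange_big.
under [RHS]eq_bigr do rewrite /LL mulr_suml.
rewrite [RHS]exchange_big; apply: eq_bigr => m _; apply: eq_bigr => h _.
by rewrite mulr_sumr; apply: eq_bigr => s _; ring.
Qed.

Lemma TT_cons_nil u v w ws o i g ga :
  nilp o || nilp i -> TT u v (w :: ws) o i g ga = 0.
Proof.
move=> oi; rewrite /TT big_seq big1 // => s; rewrite mem_bitseqs.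
case: o oi => [|? ?] /=; first by rewrite mul0r.
by case: i => // _; case: s => // ? ?; rewrite mulr0.
Qed.

Lemma Bop_Bop u v ws vec out :
  Bop u ws (Bop v ws vec) out =
  \sum_(s <- bitseqs (size ws)) TT u v ws out s (false, false) (true, true) * vec s.
Proof.
rewrite /Bop /Top /TT; under eq_bigr do rewrite mulr_sumr.
rewrite exchange_big; apply: eq_bigr => s' _; rewrite mulr_suml.
by apply: eq_bigr => s _; rewrite mulrA.
Qed.

Section YangBaxter.
Hypothesis h1 : c * d + a * f = 0.
Hypothesis h2 : t * c * d + b * e = 0.

Let eq_mod_rel (X Y l1 l2 : R) :
  X - Y = l1 * (c * d + a * f) + l2 * (t * c * d + b * e) -> X = Y.
Proof. by rewrite h1 h2 !mulr0 addr0 => /eqP; rewrite subr_eq0 => /eqP. Qed.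

Ltac by_relations m :=
  first [ apply: (@eq_mod_rel _ _ m (- m)); ring
        | apply: (@eq_mod_rel _ _ (m * t ^+ 2) (- m)); ring ].

Lemma RLL_LLR u v w o i g al :
  \sum_(ga : bool * bool) LL u v w o i g ga * Rmat u v ga al =
  \sum_(ga : bool * bool) Rmat u v g ga * LL v u w o i ga al.
Proof.
case: o i g al => [] [] [[] []] [[] []]; rewrite !big_bool_pair /LL !big_bool /=; try ring.
all: first [ by_relations ((t - 1) * w * (u - v) * u)
           | by_relations (- ((t - 1) * w * (u - v) * u))
           | by_relations ((t - 1) * w * (u - v) * v)
           | by_relations (- ((t - 1) * w * (u - v) * v)) ].
Qed.

Lemma RTT_TTR u v ws o i g al :
  \sum_(ga : bool * bool) TT u v ws o i g ga * Rmat u v ga al =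
  \sum_(ga : bool * bool) Rmat u v g ga * TT v u ws o i ga al.
Proof.
elim: ws o i g al => [|w ws IH] o i g al.
  case: o i => [|? ?] [|? ?]; case: g al => [[] []] [[] []];
  rewrite /TT /= !big_bool_pair /= !big_bitseqs0 /=; ring.
case: o i => [|o1 o] [|i1 i]; try by rewrite !big1 // => h _; rewrite TT_cons_nil ?mulr0 ?mul0r.
transitivity (\sum_(h : bool * bool)
    (\sum_(ga : bool * bool) LL u v w o1 i1 h ga * Rmat u v ga al) * TT u v ws o i g h).
  under eq_bigr do rewrite TT_cons mulr_suml.
  rewrite exchange_big; apply: eq_bigr => h _; rewrite mulr_suml.
  by apply: eq_bigr => ga _; rewrite mulrAC.
under eq_bigr do rewrite RLL_LLR mulr_suml.
rewrite exchange_big.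
transitivity (\sum_(ga : bool * bool) LL v u w o1 i1 ga al *
   \sum_(h : bool * bool) TT u v ws o i g h * Rmat u v h ga).
  by apply: eq_bigr => ga _; rewrite mulr_sumr; apply: eq_bigr => h _; ring.
under eq_bigr do rewrite IH mulr_sumr.
rewrite exchange_big; apply: eq_bigr => de _.
by rewrite TT_cons mulr_sumr; apply: eq_bigr => ga _; ring.
Qed.

Lemma BB_comm_scaled u v ws o i :
  (t * u - v) * TT u v ws o i (false, false) (true, true) =
  (t * u - v) * TT v u ws o i (false, false) (true, true).
Proof.
have := RTT_TTR u v ws o i (false, false) (true, true).
by rewrite !big_bool_pair /= !mulr0 !mul0r !addr0 !add0r mulrC.
Qed.

End YangBaxter.

End SixVertexModel.

Arguments vacuum {R}.

Section RingMorphism.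
Variables (S S' : comPzRingType) (phi : {rmorphism S -> S'}).
Variables t a b c d e f : S.

Lemma Lweight_rmorph u w g dl al be :
  phi (Lweight t a b c d e f u w g dl al be) =
  Lweight (phi t) (phi a) (phi b) (phi c) (phi d) (phi e) (phi f) (phi u) (phi w) g dl al be.
Proof.
by case: g dl al be => [] [] [] []; rewrite ?rmorphD ?rmorphM ?rmorphB ?rmorph1 ?rmorph0.
Qed.

Lemma monodromy_rmorph u ws o i al fin :
  phi (monodromy t a b c d e f u ws o i al fin) =
  monodromy (phi t) (phi a) (phi b) (phi c) (phi d) (phi e) (phi f) (phi u) (map phi ws) o i al fin.
Proof.
elim: ws o i al => [|w ws IH] [|o1 o] [|i1 i] al /=; rewrite ?rmorph0 ?rmorph_nat //.
by rewrite rmorph_sum; apply: eq_bigr => g _; rewrite rmorphM Lweight_rmorph IH.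
Qed.

Lemma Top_rmorph u ws al fin v out :
  phi (Top t a b c d e f u ws al fin v out) =
  Top (phi t) (phi a) (phi b) (phi c) (phi d) (phi e) (phi f) (phi u) (map phi ws) al fin
    (fun s => phi (v s)) out.
Proof.
rewrite /Top rmorph_sum size_map; apply: eq_bigr => s _.
by rewrite rmorphM monodromy_rmorph.
Qed.

Lemma TT_rmorph u v ws o i g ga :
  phi (TT t a b c d e f u v ws o i g ga) =
  TT (phi t) (phi a) (phi b) (phi c) (phi d) (phi e) (phi f) (phi u) (phi v) (map phi ws) o i g ga.
Proof.
rewrite /TT rmorph_sum size_map; apply: eq_bigr => s _.
by rewrite rmorphM !monodromy_rmorph.
Qed.

Lemma pfZ_rmorph us ws :
  phi (pfZ t a b c d e f us ws) =
  pfZ (phi t) (phi a) (phi b) (phi c) (phi d) (phi e) (phi f) (map phi us) (map phi ws).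
Proof.
rewrite /pfZ size_map; move: (nseq _ true); elim: us => [|u us IH] out /=.
  by rewrite /vacuum rmorph_nat.
by rewrite [LHS]Top_rmorph; apply: eq_Top => s _; apply: IH.
Qed.

End RingMorphism.

Section Commutation.
Variable R : fieldType.
Variables t a b c d e f : R.
Hypotheses (ht0 : t != 0) (h1 : c * d + a * f = 0) (h2 : t * c * d + b * e = 0).

Lemma BB_comm u v ws o i :
  TT t a b c d e f u v ws o i (false, false) (true, true) =
  TT t a b c d e f v u ws o i (false, false) (true, true).
Proof.
have h1X : c%:P * d%:P + a%:P * f%:P = 0 :> {poly R} by rewrite -!polyCM -polyCD h1.
have h2X : t%:P * c%:P * d%:P + b%:P * e%:P = 0 :> {poly R}.
  by rewrite -!polyCM -polyCD h2.
have tX_neq0 : t%:P * 'X - v%:P != 0 :> {poly R}.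
  apply: (contraNneq _ ht0) => /(congr1 (fun p : {poly R} => p`_1)).
  by rewrite coefB coefCM coefX coefC /= mulr1 subr0 coef0 => ->.
have := BB_comm_scaled h1X h2X 'X v%:P (map polyC ws) o i.
move/(mulfI tX_neq0)/(congr1 (horner_eval u)).
by rewrite !TT_rmorph map_horner_polyC /= /horner_eval !hornerC hornerX.
Qed.

Lemma Bop_comm u v ws vec :
  Bop t a b c d e f u ws (Bop t a b c d e f v ws vec) =
  Bop t a b c d e f v ws (Bop t a b c d e f u ws vec).
Proof.
by apply: functional_extensionality => out; rewrite !Bop_Bop; under eq_bigr do rewrite BB_comm.
Qed.

End Commutation.

Lemma pfZ_perm (R : fieldType) (t a b c d e f : R) us us' ws :
  t != 0 -> c * d + a * f = 0 -> t * c * d + b * e = 0 -> perm_eq us us' ->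
  pfZ t a b c d e f us ws = pfZ t a b c d e f us' ws.
Proof. by move=> ht0 h1 h2 pe; rewrite /pfZ (foldr_perm _ _ pe) // => *; apply: Bop_comm. Qed.

Section Polynomiality.
Variable R : comNzRingType.
Variables t a b c d e f : R.
Local Notation TopX := (Top t%:P a%:P b%:P c%:P d%:P e%:P f%:P).
Local Notation BopX := (Bop t%:P a%:P b%:P c%:P d%:P e%:P f%:P).

Lemma size_mul_leq (p q : {poly R}) i j :
  (size p <= i)%N -> (size q <= j)%N -> (size (p * q)%R <= (i + j).-1)%N.
Proof.
move=> hp hq; apply: leq_trans (size_polyMleq _ _) _.
by rewrite -!subn1 leq_sub2r // leq_add.
Qed.

Lemma size_linear_poly (k l : R) : (size (k%:P + l%:P * 'X)%R <= 2)%N.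
Proof. by rewrite addrC size_MXaddC; case: ifP => // _; rewrite ltnS size_polyC_leq1. Qed.

Lemma size_Top_polyC u ws al fin (v : seq bool -> {poly R}) o k :
  (forall s, size s = size ws -> (size (v s) <= k)%N) ->
  (size (TopX u%:P (map polyC ws) al fin v o) <= k)%N.
Proof.
move=> v_le; rewrite /Top size_map big_seq.
apply: leq_trans (size_sum _ _ _) _.
apply/bigmax_leqP_seq => s; rewrite mem_bitseqs => /eqP ss _.
rewrite -(monodromy_rmorph polyC) mul_polyC.
exact: leq_trans (size_scale_leq _ _) (v_le s ss).
Qed.

Lemma size_foldr_Bop_X us ws o : size o = size ws ->
  let Z := foldr (fun u => BopX u (rcons (map polyC ws) 'X)) (vacuum (size ws).+1)
                 (map polyC us) in
  (size (Z (rcons o false)) <= (size us).+1)%N /\ (size (Z (rcons o true)) <= size us)%N.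
Proof.
move=> so Z; rewrite {}/Z; elim: us o so => [|u us IH] o so /=.
  have [-> ->] := @vacuum_rcons {poly R} _ _ so.
  by rewrite size_poly0 /vacuum -polyC_natr size_polyC_leq1.
have sow : size o = size (map polyC ws) by rewrite size_map.
rewrite Bop_rcons_false // Bop_rcons_true // -!polyCM; split.
  apply: (@size_mul_leq _ _ 2 (size us).+1); first exact: size_linear_poly.
  by apply: size_Top_polyC => s ss; case: (IH s ss).
apply: leq_trans (size_polyD _ _) _; rewrite geq_max; apply/andP; split.
  apply: (@size_mul_leq _ _ 2 (size us)); first exact: size_linear_poly.
  by apply: size_Top_polyC => s ss; case: (IH s ss).
apply: (@size_mul_leq _ _ 1 (size us).+1).
  by rewrite -polyC1 -polyCB -!polyCM size_polyC_leq1.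
by apply: size_Top_polyC => s ss; case: (IH s ss).
Qed.

Lemma pfZ_poly_last us ws : size us = (size ws).+1 ->
  exists p : {poly R}, (size p <= (size ws).+1)%N /\
    forall x, pfZ t a b c d e f us (rcons ws x) = p.[x].
Proof.
move=> su; exists (pfZ t%:P a%:P b%:P c%:P d%:P e%:P f%:P (map polyC us) (rcons (map polyC ws) 'X)).
split=> [|x].
  rewrite /pfZ size_rcons size_map nseqS_rcons.
  by have [_] := size_foldr_Bop_X us (size_nseq (size ws) true); rewrite su.
have := pfZ_rmorph (horner_eval x) t%:P a%:P b%:P c%:P d%:P e%:P f%:P (map polyC us)
  (rcons (map polyC ws) 'X).
by rewrite map_rcons !map_horner_polyC /= /horner_eval !hornerC hornerX.
Qed.

End Polynomiality.

Lemma pfZ_root (R : fieldType) (t a b c d e f : R) us ws n k :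
  t != 0 -> b != 0 -> c * d + a * f = 0 -> t * c * d + b * e = 0 ->
  size ws = n -> size us = n.+1 -> (k < n.+1)%N ->
  pfZ t a b c d e f us (rcons ws (- (a * us`_k) / b)) =
  (1 - t) * c * a ^+ n * us`_k
  * (\prod_(j < n.+1 | j != k :> nat) (t * us`_j - us`_k))
  * (\prod_(w <- ws) (e * us`_k + f * w))
  * pfZ t a b c d e f (take k us ++ drop k.+1 us) ws.
Proof.
move=> ht0 hb h1 h2 sw su kn; set uk := us`_k; set x := - (a * uk) / b.
set us' := take k us ++ drop k.+1 us.
have bx : b * x = - (a * uk) by rewrite mulrC divfK.
have root_x : a * uk + b * x = 0 by rewrite bx subrr.
have sus' : size us' = n by rewrite size_cat size_take size_drop su kn subSS subnKC.
have us_perm : perm_eq us (rcons us' uk).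
  rewrite -{1}(cat_take_drop k us) (drop_nth 0) ?su // perm_sym perm_rcons.
  by rewrite -cat1s perm_catCA.
rewrite (pfZ_perm _ ht0 h1 h2 us_perm) /pfZ size_rcons nseqS_rcons.
have [_ ->] := foldr_Bop_root t c d e f us' root_x (size_nseq (size ws) true).
rewrite (big_ord_skip (fun y => t * y - uk) su kn) -/us'.
under eq_bigr do rewrite bx -mulrA -mulrBr.
rewrite big_split big_const_seq count_predT iter_mulr_1 sus' sw /=; ring.
Qed.

Lemma pfZ1 (R : comPzRingType) (t a b c d e f : R) u w :
  pfZ t a b c d e f [:: u] [:: w] = (1 - t) * c * u.
Proof. by rewrite /pfZ /= /Bop /Top big_bitseqs_delta //= big_bool /=; ring. Qed.

Lemma Zpf_pfZ (R : numClosedFieldType) (t a b c d e f : R) N us ws :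
  size ws = N -> Zpf t a b c d e f N us ws = pfZ t a b c d e f us ws.
Proof.
move=> <-; rewrite /Zpf /pfZ -[nseq _ true]/(val (nseq_tuple (size ws) true)).
move: (nseq_tuple _ true); elim: us => [|u us IH] out //=.
by rewrite /Bop /Top -big_tuple_bitseqs; apply: eq_bigr => s _; rewrite IH.
Qed.

Theorem mainTheorem6 (R : numClosedFieldType) (t a b c d e f : R)
  (ht0 : t != 0) (ha : a != 0) (hb : b != 0) (hc : c != 0) (hd : d != 0)
  (he : e != 0) (hf : f != 0) (ht1 : t != 1)
  (h1 : c * d + a * f = 0) (h2 : t * c * d + b * e = 0) :
  (* (1) polynomial in w_N of degree at most N-1 *)
  (forall (N : nat) (us ws : seq R), size us = N.+1 -> size ws = N ->
     exists p : {poly R}, (size p <= N.+1)%N /\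
       forall x : R, Zpf t a b c d e f N.+1 us (rcons ws x) = p.[x]) /\
  (* (2) symmetric in u_1, ..., u_N *)
  (forall (N : nat) (us us' ws : seq R), size us = N -> size ws = N ->
     perm_eq us us' -> Zpf t a b c d e f N us ws = Zpf t a b c d e f N us' ws) /\
  (* (3) Z_1 *)
  (forall u1 w1 : R, Zpf t a b c d e f 1 [:: u1] [:: w1] = (1 - t) * c * u1) /\
  (* (4) recursion at w_N = - a u_k / b, k 0-based *)
  (forall (N : nat) (us ws : seq R) (k : nat), (2 <= N)%N ->
     size us = N -> size ws = (N - 1)%N -> (k < N)%N ->
     Zpf t a b c d e f N us (rcons ws (- (a * us`_k) / b)) =
       (1 - t) * c * a ^+ (N - 1) * us`_k
       * (\prod_(j < N | j != k :> nat) (t * us`_j - us`_k))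
       * (\prod_(w <- ws) (e * us`_k + f * w))
       * Zpf t a b c d e f (N - 1) (take k us ++ drop k.+1 us) ws).
Proof.
split; [|split; [|split]].
- move=> N us ws su sw; subst N.
  have [p [size_p eval_p]] := pfZ_poly_last t a b c d e f su.
  by exists p; split=> // x; rewrite Zpf_pfZ ?size_rcons.
- move=> N us us' ws _ sw pe; rewrite !Zpf_pfZ //; exact: pfZ_perm.
- by move=> u1 w1; rewrite Zpf_pfZ ?pfZ1.
- move=> [|[|n]] us ws k // _ su; rewrite !subn1 /= => sw kn.
  by rewrite !Zpf_pfZ ?size_rcons ?sw // (pfZ_root ht0 hb h1 h2 sw su kn).
Qed.
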